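(* Pruning is correct, i.e., (1) If ⟨E, C^WW, C^WR⟩ ↪* ⟨E_p, C^WW_p, C^WR_p⟩, then G is SER-acyclic if and only if G_p is SER-acyclic. (2) If ⟨E, C^WW, C^WR⟩ ↪* S_#, then G is not SER-acyclic.
   Context: A history H = (T, SO) consists of a set T of committed transactions (key-value reads R(x,v) and writes W(x,v)) and a session order SO. WriteTx_x denotes the set of transactions writing key x. The hyper-polygraph of H is G = (V, E, (C^WW, C^WR)) where V is the set of transactions, E is the set of known edges (labelled SO, WR, WW, RW with a key; initially the SO edges and the WR edges whose read value has a unique writer), C^WW = {{T →WW(x) S, S →WW(x) T} | T, S ∈ WriteTx_x, T ≠ S}, and C^WR = {{T_i →WR(x) S | T_i writes v to x} | S reads v from x}. A graph G' = (V, E') is compatible with G if E' ⊇ E, E' contains exactly one edge from each constraint in C^WW and in C^WR, and E' is closed under the derivation rule: T' →WR(x) T and T' →WW(x) S in E' imply T →RW(x) S in E'. G is called SER-acyclic if some compatible graph is acyclic (equivalently, for the hyper-polygraph of H, H satisfies Serializability, given H satisfies internal consistency). Pruning is modelled as a transition system ↪ on states ⟨E, C^WW, C^WR⟩, starting from the components of G; a state ⟨E_p, C^WW_p, C^WR_p⟩ corresponds to the hyper-polygraph G_p = (V, E_p, (C^WW_p, C^WR_p)). The rules, applied nondeterministically until none applies, are: - No-Choice: if ∅ ∈ C^WW ∪ C^WR, move to the terminal violation state S_#. - Cycle: if E is cyclic, move to S_#. - WW-Elim: for cons ∈ C^WW containing T →WW(x) T', if E ∪ ({T →WW(x) T'}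 ∪ {S →RW(x) T' | T →WR(x) S ∈ E}) is cyclic, replace cons by cons \ {T →WW(x) T'}. - WR-Elim: for cons ∈ C^WR containing T →WR(x) S, if E ∪ ({T →WR(x) S} ∪ {S →RW(x) T' | T →WW(x) T' ∈ E}) is cyclic, replace cons by cons \ {T →WR(x) S}. - WW-Intro: if a singleton {T →WW(x) T'} ∈ C^WW, remove it from C^WW and add {T →WW(x) T'} ∪ {S →RW(x) T' | T →WR(x) S ∈ E} to E. - WR-Intro: if a singleton {T →WR(x) S} ∈ C^WR, remove it from C^WR and add {T →WR(x) S} ∪ {S →RW(x) T' | T →WW(x) T' ∈ E} to E. ↪* denotes a finite sequence of such transitions. *)

From Stdlib Require Import List Relations.
From mathcomp Require Import all_boot.
Import ListNotations.

Set Implicit Arguments.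
Unset Strict Implicit.

Section Hyper.
Variables (V : finType) (K Val : Type).

Inductive op := Rd (x : K) (v : Val) | Wr (x : K) (v : Val).

(* A history: every (committed) transaction T : V has its sequence of
   operations, and SO is the session order. *)
Record history := History {
  ops : V -> list op;
  SO  : V -> V -> Prop }.

Definition writes (H : history) (T : V) (x : K) (v : Val) : Prop :=
  exists l1 l2, ops H T = l1 ++ Wr x v :: l2 /\ forall w, ~ In (Wr x w) l2.

Definition writeTx (H : history) (x : K) (T : V) : Prop :=
  exists v, In (Wr x v) (ops H T).

Definition reads (H : history) (U : V) (x : K) (v : Val) : Prop :=
  exists l1 l2, ops H U = l1 ++ Rd x v :: l2 /\ forall w, ~ In (Wr x w) l1.

Inductive edge :=
| SOe (T U : V)
| WRe (x : K) (T U : V)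
| WWe (x : K) (T U : V)
| RWe (x : K) (T U : V).

Definition src (e : edge) : V :=
  match e with SOe T _ | WRe _ T _ | WWe _ T _ | RWe _ T _ => T end.
Definition dst (e : edge) : V :=
  match e with SOe _ U | WRe _ _ U | WWe _ _ U | RWe _ _ U => U end.

Definition eset := edge -> Prop.
Definition cset := eset -> Prop.

Definition esingle (e : edge) : eset := fun f => f = e.
Definition eempty : eset := fun _ => False.
Definition eunion (A B : eset) : eset := fun f => A f \/ B f.
Definition eminus (A : eset) (e : edge) : eset := fun f => A f /\ f <> e.
Definition esubset (A B : eset) : Prop := forall f, A f -> B f.

Definition creplace (C : cset) (c c' : eset) : cset :=
  fun d => (C d /\ d <> c) \/ d = c'.
Definition cremove (C : cset) (c : eset) : cset := fun d => C d /\ d <> c.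

Definition cyclic (E : eset) : Prop :=
  exists t, clos_trans V (fun a b => exists e, E e /\ src e = a /\ dst e = b) t t.

Definition init_E (H : history) : eset := fun e =>
  (exists T U, SO H T U /\ e = SOe T U) \/
  (exists x T U v, reads H U x v /\ writes H T x v /\
     (forall T', writes H T' x v -> T' = T) /\ e = WRe x T U).

Definition init_CWW (H : history) : cset := fun c =>
  exists x T U, writeTx H x T /\ writeTx H x U /\ T <> U /\
    c = (fun e => e = WWe x T U \/ e = WWe x U T).

Definition init_CWR (H : history) : cset := fun c =>
  exists U x v, reads H U x v /\
    c = (fun e => exists Ti, writes H Ti x v /\ e = WRe x Ti U).

Definition compatible (E : eset) (CWW CWR : cset) (E' : eset) : Prop :=
  esubset E E' /\
  (forall c, CWW c -> exists! e, c e /\ E' e) /\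
  (forall c, CWR c -> exists! e, c e /\ E' e) /\
  (forall x T' T U, E' (WRe x T' T) -> E' (WWe x T' U) -> E' (RWe x T U)).

Definition SER_acyclic (E : eset) (CWW CWR : cset) : Prop :=
  exists E', compatible E CWW CWR E' /\ ~ cyclic E'.

Inductive state := St (E : eset) (CWW CWR : cset) | Sviol.

Definition derivWW (E : eset) (x : K) (T T' : V) : eset :=
  fun f => exists U, E (WRe x T U) /\ f = RWe x U T'.
Definition derivWR (E : eset) (x : K) (T U : V) : eset :=
  fun f => exists T', E (WWe x T T') /\ f = RWe x U T'.

Inductive step : state -> state -> Prop :=
| NoChoice E CWW CWR :
    CWW eempty \/ CWR eempty -> step (St E CWW CWR) Sviol
| CycleR E CWW CWR :
    cyclic E -> step (St E CWW CWR) Sviol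
| WWElim E CWW CWR cons x T T' :
    CWW cons -> cons (WWe x T T') ->
    cyclic (eunion E (eunion (esingle (WWe x T T')) (derivWW E x T T'))) ->
    step (St E CWW CWR)
         (St E (creplace CWW cons (eminus cons (WWe x T T'))) CWR)
| WRElim E CWW CWR cons x T U :
    CWR cons -> cons (WRe x T U) ->
    cyclic (eunion E (eunion (esingle (WRe x T U)) (derivWR E x T U))) ->
    step (St E CWW CWR)
         (St E CWW (creplace CWR cons (eminus cons (WRe x T U))))
| WWIntro E CWW CWR x T T' :
    CWW (esingle (WWe x T T')) ->
    step (St E CWW CWR)
         (St (eunion E (eunion (esingle (WWe x T T')) (derivWW E x T T')))
             (cremove CWW (esingle (WWe x T T'))) CWR)
| WRIntro E CWW CWR x T U :
    CWR (esingle (WRe x T U)) ->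
    step (St E CWW CWR)
         (St (eunion E (eunion (esingle (WRe x T U)) (derivWR E x T U)))
             CWW (cremove CWR (esingle (WRe x T U)))).

Definition steps : state -> state -> Prop := clos_refl_trans state step.

End Hyper.

Arguments Sviol {V K}.

(** Every pruning rule preserves the set of acyclic compatible graphs: an
    eliminated edge lies in no acyclic compatible graph, since together with
    the RW edges it forces (which every compatible graph contains by the
    derivation rule) it closes a cycle; an introduced edge, being the only
    choice of its constraint, lies in every compatible graph together with the
    RW edges it forces.  A violation state is reached only when some
    constraint offers no choice or the known edges already contain a cycle,
    and then there is no acyclic compatible graph at all. *)

From Stdlib Require Import Relations Classical.
From mathcomp Require Import all_boot.

Set Implicit Arguments.
Unset Strict Implicit.
Set Bullet Behavior "Strict Subproofs".

Section Pruning.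
Variables (V : finType) (K : Type).
Implicit Types (E D : eset V K) (C : cset V K) (e : edge V K).

Definition edge_rel E : relation V :=
  fun a b => exists e, E e /\ src e = a /\ dst e = b.

Lemma cyclic_mono E (E' : eset V K) : esubset E E' -> cyclic E -> cyclic E'.
Proof.
  intros Hsub [t Ht]; exists t.
  enough (Hmono : forall a b,
    clos_trans V (edge_rel E) a b -> clos_trans V (edge_rel E') a b)
    by exact (Hmono t t Ht).
  intros a b Hab.
  induction Hab as [a b (e & He & Ha & Hb) | a b c _ IHab _ IHbc].
  - apply t_step; exists e; auto.
  - eapply t_trans; eassumption.
Qed.

Definition picks_one C (E' : eset V K) : Prop :=
  forall c, C c -> exists! e, c e /\ E' e.

Definition rw_closed (E' : eset V K) : Prop :=
  forall x T' T U, E' (WRe x T' T) -> E' (WWe x T' U) -> E' (RWe x T U).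

Lemma picks_one_empty C (E' : eset V K) : C (@eempty V K) -> ~ picks_one C E'.
Proof. intros Hc Hpick; now destruct (Hpick _ Hc) as (e & [[] _] & _). Qed.

Lemma picks_one_single C (E' : eset V K) e :
  C (esingle e) -> picks_one C E' -> E' e.
Proof. intros Hc Hpick; now destruct (Hpick _ Hc) as (f & [-> Hf] & _). Qed.

Lemma picks_one_cremove C c (E' : eset V K) :
  picks_one C E' -> picks_one (cremove C c) E'.
Proof. intros Hpick d [Hd _]; exact (Hpick d Hd). Qed.

Lemma picks_one_cremove_single C (E' : eset V K) e :
  E' e -> picks_one (cremove C (esingle e)) E' -> picks_one C E'.
Proof.
  intros He Hpick c Hc.
  destruct (classic (c = esingle e)) as [-> | Hne].
  - exists e; split; [now split | now intros f [-> _]].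
  - now apply Hpick.
Qed.

Lemma picks_one_creplace_eminus C c (E' : eset V K) e :
  C c -> ~ E' e ->
  picks_one C E' <-> picks_one (creplace C c (eminus c e)) E'.
Proof.
  intros Hc He; split; intros Hpick d Hd.
  - destruct Hd as [[Hd _] | ->]; [now apply Hpick |].
    destruct (Hpick c Hc) as (f & [Hcf Hf] & Huniq).
    exists f; split.
    + split; [split |]; [exact Hcf | intros ->; contradiction | exact Hf].
    + intros g [[Hcg _] Hg]; now apply Huniq.
  - destruct (classic (d = c)) as [-> | Hne]; [| apply Hpick; now left].
    destruct (Hpick (eminus c e) (or_intror (erefl _)))
      as (f & [[Hcf _] Hf] & Huniq).
    exists f; split; [now split |].
    intros g [Hcg Hg]; apply Huniq; repeat split; auto.
    intros ->; contradiction.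
Qed.

Lemma esubset_extend E (E' : eset V K) e D :
  esubset E E' -> E' e -> esubset D E' ->
  esubset (eunion E (eunion (esingle e) D)) E'.
Proof. intros HE He HD f [Hf | [-> | Hf]]; auto. Qed.

Lemma mem_extend E e D : eunion E (eunion (esingle e) D) e.
Proof. right; left; reflexivity. Qed.

Lemma derivWW_sub E (E' : eset V K) x T T' :
  esubset E E' -> rw_closed E' -> E' (WWe x T T') ->
  esubset (derivWW E x T T') E'.
Proof. intros Hsub Hcl He f (U & HU & ->); eapply Hcl; eauto. Qed.

Lemma derivWR_sub E (E' : eset V K) x T U :
  esubset E E' -> rw_closed E' -> E' (WRe x T U) ->
  esubset (derivWR E x T U) E'.
Proof. intros Hsub Hcl He f (T' & HT' & ->); eapply Hcl; eauto. Qed.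

Lemma not_mem_of_cyclic_extension E (E' : eset V K) e D :
  esubset E E' -> (E' e -> esubset D E') -> ~ cyclic E' ->
  cyclic (eunion E (eunion (esingle e) D)) -> ~ E' e.
Proof.
  intros Hsub HD Hacyc Hcyc He.
  apply Hacyc; eapply cyclic_mono; [apply esubset_extend | exact Hcyc]; auto.
Qed.

Lemma compatible_WW_elim E CWW CWR c x T T' (E' : eset V K) :
  CWW c ->
  cyclic (eunion E (eunion (esingle (WWe x T T')) (derivWW E x T T'))) ->
  ~ cyclic E' ->
  compatible E CWW CWR E' <->
  compatible E (creplace CWW c (eminus c (WWe x T T'))) CWR E'.
Proof.
  intros Hc Hcyc Hacyc.
  have Hout : esubset E E' -> rw_closed E' -> ~ E' (WWe x T T').
  { intros Hsub Hcl.
    exact (not_mem_of_cyclic_extension Hsub (derivWW_sub Hsub Hcl)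
             Hacyc Hcyc). }
  split; intros (Hsub & Hww & Hwr & Hcl); repeat split; auto;
    eapply (picks_one_creplace_eminus Hc (Hout Hsub Hcl)); exact Hww.
Qed.

Lemma compatible_WR_elim E CWW CWR c x T U (E' : eset V K) :
  CWR c ->
  cyclic (eunion E (eunion (esingle (WRe x T U)) (derivWR E x T U))) ->
  ~ cyclic E' ->
  compatible E CWW CWR E' <->
  compatible E CWW (creplace CWR c (eminus c (WRe x T U))) E'.
Proof.
  intros Hc Hcyc Hacyc.
  have Hout : esubset E E' -> rw_closed E' -> ~ E' (WRe x T U).
  { intros Hsub Hcl.
    exact (not_mem_of_cyclic_extension Hsub (derivWR_sub Hsub Hcl)
             Hacyc Hcyc). }
  split; intros (Hsub & Hww & Hwr & Hcl); repeat split; auto;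
    eapply (picks_one_creplace_eminus Hc (Hout Hsub Hcl)); exact Hwr.
Qed.

Lemma compatible_WW_intro E CWW CWR x T T' (E' : eset V K) :
  CWW (esingle (WWe x T T')) ->
  compatible E CWW CWR E' <->
  compatible (eunion E (eunion (esingle (WWe x T T')) (derivWW E x T T')))
    (cremove CWW (esingle (WWe x T T'))) CWR E'.
Proof.
  intros Hc; split; intros (Hsub & Hww & Hwr & Hcl).
  - have He := picks_one_single Hc Hww.
    split; [|split; [|split]]; auto.
    + apply esubset_extend; auto using derivWW_sub.
    + exact (picks_one_cremove Hww).
  - have He : E' (WWe x T T') by apply Hsub, mem_extend.
    split; [|split; [|split]]; auto.
    + intros f Hf; apply Hsub; now left.
    + exact (picks_one_cremove_single He Hww).
Qed.

Lemma compatible_WR_intro E CWW CWR x T U (E' : eset V K) :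
  CWR (esingle (WRe x T U)) ->
  compatible E CWW CWR E' <->
  compatible (eunion E (eunion (esingle (WRe x T U)) (derivWR E x T U)))
    CWW (cremove CWR (esingle (WRe x T U))) E'.
Proof.
  intros Hc; split; intros (Hsub & Hww & Hwr & Hcl).
  - have He := picks_one_single Hc Hwr.
    split; [|split; [|split]]; auto.
    + apply esubset_extend; auto using derivWR_sub.
    + exact (picks_one_cremove Hwr).
  - have He : E' (WRe x T U) by apply Hsub, mem_extend.
    split; [|split; [|split]]; auto.
    + intros f Hf; apply Hsub; now left.
    + exact (picks_one_cremove_single He Hwr).
Qed.

Lemma step_compatible_iff E CWW CWR E2 CWW2 CWR2 (E' : eset V K) :
  step (St E CWW CWR) (St E2 CWW2 CWR2) -> ~ cyclic E' ->
  compatible E CWW CWR E' <-> compatible E2 CWW2 CWR2 E'.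
Proof.
  intros Hstep Hacyc; inversion Hstep; subst;
    eauto using compatible_WW_elim, compatible_WR_elim,
                compatible_WW_intro, compatible_WR_intro.
Qed.

Lemma step_violation E CWW CWR (E' : eset V K) :
  step (St E CWW CWR) Sviol -> compatible E CWW CWR E' -> cyclic E'.
Proof.
  intros Hstep (Hsub & Hww & Hwr & _).
  inversion Hstep as [? ? ? Hempty | ? ? ? Hcyc | | | |]; subst.
  - destruct Hempty as [Hempty | Hempty].
    + now destruct (picks_one_empty Hempty Hww).
    + now destruct (picks_one_empty Hempty Hwr).
  - exact (cyclic_mono Hsub Hcyc).
Qed.

Definition acyclic_compatible (s : state V K) (E' : eset V K) : Prop :=
  match s with
  | St E CWW CWR => compatible E CWW CWR E' /\ ~ cyclic E'
  | Sviol => False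
  end.

Lemma step_acyclic_compatible_iff s t (E' : eset V K) :
  step s t -> acyclic_compatible s E' <-> acyclic_compatible t E'.
Proof.
  intros Hstep.
  destruct s as [E CWW CWR |]; [| inversion Hstep].
  destruct t as [E2 CWW2 CWR2 |]; simpl.
  - split; intros [Hc Hacyc]; split; auto;
      now apply (step_compatible_iff Hstep Hacyc).
  - split; [intros [Hc Hacyc] | contradiction].
    exact (Hacyc (step_violation Hstep Hc)).
Qed.

Lemma steps_acyclic_compatible_iff s t (E' : eset V K) :
  steps s t -> acyclic_compatible s E' <-> acyclic_compatible t E'.
Proof.
  induction 1 as [s t Hstep | s | s u t _ IHsu _ IHut].
  - exact (step_acyclic_compatible_iff E' Hstep).
  - reflexivity.
  - now rewrite IHsu.
Qed.

Lemma steps_SER_acyclic_iff E CWW CWR Ep CWWp CWRp :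
  steps (St E CWW CWR) (St Ep CWWp CWRp) ->
  SER_acyclic E CWW CWR <-> SER_acyclic Ep CWWp CWRp.
Proof.
  intros Hsteps; split; intros [E' HE']; exists E';
    now apply (steps_acyclic_compatible_iff E' Hsteps).
Qed.

Lemma steps_violation_not_SER_acyclic E CWW CWR :
  steps (St E CWW CWR) Sviol -> ~ SER_acyclic E CWW CWR.
Proof.
  intros Hsteps [E' HE'].
  exact (proj1 (steps_acyclic_compatible_iff E' Hsteps) HE').
Qed.

End Pruning.

Theorem theoremE1 (V : finType) (K Val : Type) (H : history V K Val) :
  (forall (Ep : eset V K) (CWWp CWRp : cset V K),
      steps (St (init_E H) (init_CWW H) (init_CWR H)) (St Ep CWWp CWRp) ->
      (SER_acyclic (init_E H) (init_CWW H) (init_CWR H) <->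
       SER_acyclic Ep CWWp CWRp)) /\
  (steps (St (init_E H) (init_CWW H) (init_CWR H)) Sviol ->
   ~ SER_acyclic (init_E H) (init_CWW H) (init_CWR H)).
Proof.
  split.
  - intros Ep CWWp CWRp; apply steps_SER_acyclic_iff.
  - apply steps_violation_not_SER_acyclic.
Qed.
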